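(* Let $k\ge4$ be an integer and $\eta\in[\eta_{k+1},\pi/k)$. If $\arg z_{2k-1}\in(0,\eta]$, then $z_{2k}\in\triangle(0,z_0,1)$, $z_{2k+1}\in\triangle(0,z_1,z_0)$, $w_{2k}\in\triangle(1,w_0,a)$ and $w_{2k+1}\in\triangle(1,w_1,w_0)$. If $\arg z_{2k-1}\in(\eta,2\eta]$, then $z_{2k}\in\triangle(0,1,z_{2k-1})$, $z_{2k+1}\in\triangle(0,z_0,1)$, $w_{2k}\in\triangle(1,a,w_{2k-1})$ and $w_{2k+1}\in\triangle(1,w_0,a)$.
   Context: For $\eta\in(0,\pi/3)$ let $a=\frac{e^{-i\eta}}{2\cos\eta}$, $c=\frac{1}{1-|a|^4}$, and for integers $j\ge0$ put $z_j=ca^{j+1}$, $w_j=1-c|a|^2a^j$. $\arg$ takes values in $[0,2\pi)$ (under the hypotheses $\arg z_{2k-1}=2\pi-2k\eta\in(0,2\eta]$). For integers $k\ge1$ let $\Phi_k(\eta)=(1-|a|^4)\sin((k-1)\eta)-|a|^3\sin((k-2)\eta)+|a|^k\sin\eta$; for each $k\ge4$, $\Phi_k$ has a unique zero in $(\pi/k,\pi/(k-1))$, denoted $\eta_k$. $\triangle(u,v,w)$ is the closed solid triangle with vertices $u,v,w$. *)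

From Stdlib Require Import Reals Lra ClassicalEpsilon.
From Coquelicot Require Import Coquelicot.
Open Scope R_scope.

Definition aa (eta : R) : C :=
  Cdiv (cos eta, - sin eta) (RtoC (2 * cos eta)).

Definition cc (eta : R) : R := 1 / (1 - (Cmod (aa eta)) ^ 4).

Definition zz (eta : R) (j : nat) : C :=
  Cmult (RtoC (cc eta)) (Cpow (aa eta) (S j)).
Definition ww (eta : R) (j : nat) : C :=
  Cminus (RtoC 1)
    (Cmult (RtoC (cc eta * (Cmod (aa eta)) ^ 2)) (Cpow (aa eta) j)).

Definition is_arg (z : C) (theta : R) : Prop :=
  0 <= theta < 2 * PI /\
  z = Cmult (RtoC (Cmod z)) (cos theta, sin theta).

Definition Phi (k : nat) (eta : R) : R :=
  let m := Cmod (aa eta) in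
  (1 - m ^ 4) * sin ((INR k - 1) * eta) - m ^ 3 * sin ((INR k - 2) * eta)
  + m ^ k * sin eta.

(* eta_k : the (unique, for k >= 4) zero of Phi_k in (pi/k, pi/(k-1)) *)
Definition eta_k (k : nat) : R :=
  epsilon (inhabits 0)
    (fun e => PI / INR k < e < PI / (INR k - 1) /\ Phi k e = 0).

Definition in_triangle (p u v w : C) : Prop :=
  exists l1 l2 l3 : R, 0 <= l1 /\ 0 <= l2 /\ 0 <= l3 /\ l1 + l2 + l3 = 1 /\
    p = Cplus (Cplus (Cmult (RtoC l1) u) (Cmult (RtoC l2) v)) (Cmult (RtoC l3) w).

From Stdlib Require Import Reals Lra Lia.
From Coquelicot Require Import Coquelicot.
Open Scope R_scope.

(* Write r = |a| = 1/(2 cos eta), so that a = r e^{-i eta} and, since Re a = 1/2,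
   1 - a = r e^{i eta}.  Multiplying by a rotates by -eta and shrinks by r <= 3/4,
   and 1 - w_{j+1} = r^2 z_j.  Hence, once z_{2k-1} = rho e^{i theta} is fixed,
   every point and vertex involved is an explicit polar number, with rho = c r^{2k}
   at most c/8.  A point rho' e^{i phi} lies in the triangle 0, rho1 e^{i beta},
   rho2 e^{i gamma} as soon as beta <= phi <= gamma, 0 < gamma - beta <= pi/2 and
   rho' (rho1 + rho2) <= rho1 rho2; the range of theta gives the angle conditions,
   the smallness of rho the modulus conditions, and the triangles with vertex 1
   are images of triangles with vertex 0 under z |-> 1 - z. *)

Definition polar (rho phi : R) : C := (rho * cos phi, rho * sin phi).

Lemma polar_mult rho phi rho' phi' :
  (polar rho phi * polar rho' phi')%C = polar (rho * rho') (phi + phi').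
Proof. unfold polar, Cmult; simpl. rewrite cos_plus, sin_plus. f_equal; ring. Qed.

Lemma RtoC_mult_polar x rho phi : (RtoC x * polar rho phi)%C = polar (x * rho) phi.
Proof. unfold polar, Cmult, RtoC; simpl. f_equal; ring. Qed.

Lemma RtoC_polar x : RtoC x = polar x 0.
Proof. unfold polar, RtoC. rewrite cos_0, sin_0. f_equal; ring. Qed.

Lemma Cmod_polar rho phi : 0 <= rho -> Cmod (polar rho phi) = rho.
Proof.
  intros Hrho. unfold Cmod, polar; simpl.
  replace (rho * cos phi * (rho * cos phi * 1) + rho * sin phi * (rho * sin phi * 1))
    with (rho ^ 2 * (sin phi ^ 2 + cos phi ^ 2)) by ring.
  rewrite <- !Rsqr_pow2, sin2_cos2, Rmult_1_r, Rsqr_pow2.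
  now apply sqrt_pow2.
Qed.

Lemma is_arg_polar z th : is_arg z th -> z = polar (Cmod z) th.
Proof. intros [_ Hz]. rewrite Hz at 1. unfold polar, Cmult, RtoC; simpl. f_equal; ring. Qed.

Definition Ccross (u v : C) : R := fst u * snd v - snd u * fst v.

Lemma Ccross_polar rho phi rho' phi' :
  Ccross (polar rho phi) (polar rho' phi') = rho * rho' * sin (phi' - phi).
Proof. unfold Ccross, polar; simpl. rewrite sin_minus. ring. Qed.

Lemma in_triangle_0_Ccross p u v :
  0 < Ccross u v -> 0 <= Ccross p v -> 0 <= Ccross u p ->
  Ccross p v + Ccross u p <= Ccross u v -> in_triangle p 0 u v.
Proof.
  destruct p as [x y], u as [ux uy], v as [vx vy]; unfold Ccross; simpl.
  intros HD Hv Hu Hsum.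
  set (D := ux * vy - uy * vx) in *.
  exists (1 - (x * vy - y * vx) / D - (ux * y - uy * x) / D),
    ((x * vy - y * vx) / D), ((ux * y - uy * x) / D).
  assert (Hl2 : 0 <= (x * vy - y * vx) / D) by (apply Rdiv_le_0_compat; lra).
  assert (Hl3 : 0 <= (ux * y - uy * x) / D) by (apply Rdiv_le_0_compat; lra).
  assert (Hl1 : (x * vy - y * vx) / D + (ux * y - uy * x) / D <= 1).
  { rewrite <- Rdiv_plus_distr. apply Rmult_le_reg_r with D; [lra|].
    unfold Rdiv. rewrite Rmult_assoc, Rinv_l; lra. }
  repeat split; try lra.
  unfold Cplus, Cmult, RtoC, D in *; simpl. f_equal; field; lra.
Qed.

Lemma in_triangle_0_polar_small rho phi rho1 be rho2 ga :
  0 <= rho -> 0 < rho1 -> 0 < rho2 -> rho * (rho1 + rho2) <= rho1 * rho2 ->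
  be <= phi <= ga -> be < ga <= be + PI / 2 ->
  in_triangle (polar rho phi) 0 (polar rho1 be) (polar rho2 ga).
Proof.
  intros Hrho Hrho1 Hrho2 Hsmall Hphi Hga.
  pose proof PI_RGT_0.
  assert (Hsin : forall x, 0 <= x <= ga - be -> 0 <= sin x <= sin (ga - be)).
  { intros x Hx. split; [apply sin_ge_0 | apply sin_incr_1]; lra. }
  assert (HS : 0 < sin (ga - be)) by (apply sin_gt_0; lra).
  destruct (Hsin (ga - phi)) as [Hs1 Hs1']; [lra|].
  destruct (Hsin (phi - be)) as [Hs2 Hs2']; [lra|].
  apply in_triangle_0_Ccross; rewrite !Ccross_polar.
  - apply Rmult_lt_0_compat; [nra | exact HS].
  - apply Rmult_le_pos; nra.
  - apply Rmult_le_pos; nra.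
  - assert (rho * rho2 * sin (ga - phi) <= rho * rho2 * sin (ga - be))
      by (apply Rmult_le_compat_l; nra).
    assert (rho1 * rho * sin (phi - be) <= rho1 * rho * sin (ga - be))
      by (apply Rmult_le_compat_l; nra).
    nra.
Qed.

Lemma in_triangle_affine b m p u v w :
  in_triangle p u v w ->
  in_triangle (b + m * p)%C (b + m * u)%C (b + m * v)%C (b + m * w)%C.
Proof.
  intros (l1 & l2 & l3 & H1 & H2 & H3 & Hs & ->).
  exists l1, l2, l3. repeat split; auto.
  replace (RtoC l1) with (1 - l2 - l3)%C
    by (rewrite <- RtoC_minus, <- RtoC_minus; f_equal; lra).
  ring.
Qed.

Lemma in_triangle_one_minus p u v :
  in_triangle p 0 u v -> in_triangle (1 - p)%C 1 (1 - u)%C (1 - v)%C.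
Proof.
  intros H. apply (in_triangle_affine 1 (-1)) in H.
  replace (in_triangle (1 - p) 1 (1 - u) (1 - v))
    with (in_triangle (1 + -1 * p) (1 + -1 * 0) (1 + -1 * u) (1 + -1 * v))
    by (f_equal; ring).
  exact H.
Qed.

Section Polar_form.

Variable eta : R.
Hypothesis eta_pos : 0 < eta.
Hypothesis eta_le : eta <= PI / 4.

Local Notation r := (/ (2 * cos eta)).
Local Notation c := (cc eta).

Lemma cos_eta_pos : 0 < cos eta.
Proof. pose proof PI_RGT_0. apply cos_gt_0; lra. Qed.

Lemma inv_2cos_pos : 0 < r.
Proof. apply Rinv_0_lt_compat. pose proof cos_eta_pos. lra. Qed.

Lemma aa_polar : aa eta = polar r (- eta).
Proof.
  pose proof cos_eta_pos.
  unfold aa, polar, Cdiv, Cinv, Cmult, RtoC; simpl.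
  rewrite cos_neg, sin_neg. f_equal; field; lra.
Qed.

Lemma Cmod_aa : Cmod (aa eta) = r.
Proof. rewrite aa_polar. apply Cmod_polar, Rlt_le, inv_2cos_pos. Qed.

Lemma aa_one_minus : aa eta = (1 - polar r eta)%C.
Proof.
  pose proof cos_eta_pos. rewrite aa_polar.
  unfold polar, Cminus, Cplus, Copp, RtoC; simpl.
  rewrite cos_neg, sin_neg. f_equal; field; lra.
Qed.

Lemma inv_2cos_le : r <= 3 / 4.
Proof.
  pose proof cos_eta_pos. pose proof PI_RGT_0.
  assert (H2 : 0 <= cos (2 * eta)) by (apply cos_ge_0; lra).
  rewrite cos_2a_cos in H2.
  rewrite <- (Rinv_inv (3 / 4)). apply Rinv_le_contravar; nra.
Qed.

Lemma cc_bounds : 0 < c <= 3 / 2.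
Proof.
  pose proof inv_2cos_pos. pose proof inv_2cos_le.
  assert (Hr4 : 0 <= r ^ 4 <= 1 / 3).
  { split; [apply pow_le; lra|]. replace (r ^ 4) with ((r * r) * (r * r)) by ring.
    assert (0 <= r * r <= 9 / 16) by nra. nra. }
  unfold cc. rewrite Cmod_aa. split.
  - apply Rdiv_lt_0_compat; lra.
  - apply Rmult_le_reg_r with (1 - r ^ 4); [lra|].
    unfold Rdiv. rewrite Rmult_assoc, Rinv_l; lra.
Qed.

Lemma aa_neq_0 : aa eta <> 0%C.
Proof. apply Cmod_gt_0. rewrite Cmod_aa. apply inv_2cos_pos. Qed.

Lemma zz_0 : zz eta 0 = polar (c * r) (- eta).
Proof. unfold zz. simpl Cpow. rewrite Cmult_1_r, aa_polar. apply RtoC_mult_polar. Qed.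

Lemma zz_S j : zz eta (S j) = (zz eta j * aa eta)%C.
Proof. unfold zz. change (Cpow (aa eta) (S (S j))) with (aa eta * Cpow (aa eta) (S j))%C. ring. Qed.

Lemma ww_0 : ww eta 0 = (1 - polar (c * r ^ 2) 0)%C.
Proof. unfold ww. simpl Cpow. rewrite Cmult_1_r, Cmod_aa, <- RtoC_polar. reflexivity. Qed.

Lemma ww_S j : ww eta (S j) = (1 - RtoC (r ^ 2) * zz eta j)%C.
Proof. unfold ww, zz. rewrite Cmod_aa, RtoC_mult. simpl Cpow. ring. Qed.

Lemma Cmod_zz_bounds j : (7 <= j)%nat -> 0 < Cmod (zz eta j) <= c / 8.
Proof.
  intros Hj. pose proof inv_2cos_pos. pose proof inv_2cos_le. pose proof cc_bounds.
  unfold zz. rewrite Cmod_mult, Cmod_pow, Cmod_R, Rabs_pos_eq, Cmod_aa by lra.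
  replace (S j) with (8 + (j - 7))%nat by lia. rewrite pow_add.
  assert (H8 : r ^ 8 <= (3 / 4) ^ 8) by (apply pow_incr; lra).
  assert (Hm : r ^ (j - 7) <= 1) by (rewrite <- (pow1 (j - 7)); apply pow_incr; lra).
  assert (0 <= r ^ 8) by (apply pow_le; lra).
  assert (0 <= r ^ (j - 7)) by (apply pow_le; lra).
  assert ((3 / 4) ^ 8 <= 1 / 8) by (simpl; lra).
  assert (r ^ 8 * r ^ (j - 7) <= 1 / 8) by nra.
  assert (0 < r ^ 8 * r ^ (j - 7)) by (rewrite <- pow_add; apply pow_lt; lra).
  unfold Rdiv. split; nra.
Qed.

Lemma zz_S_polar j rho phi :
  zz eta j = polar rho phi -> zz eta (S j) = polar (rho * r) (phi - eta).
Proof. intros Hz. rewrite zz_S, Hz, aa_polar, polar_mult. reflexivity. Qed.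

Lemma ww_S_polar j rho phi :
  zz eta j = polar rho phi -> ww eta (S j) = (1 - polar (r ^ 2 * rho) phi)%C.
Proof. intros Hz. rewrite ww_S, Hz, RtoC_mult_polar. reflexivity. Qed.

Lemma ww_polar j rho phi :
  zz eta (S j) = polar rho phi -> ww eta (S j) = (1 - polar (r * rho) (phi + eta))%C.
Proof.
  intros Hz. pose proof cos_eta_pos. pose proof aa_neq_0.
  assert (Hprev : zz eta j = polar (rho / r) (phi + eta)).
  { assert (E : (zz eta j * aa eta)%C = (polar (rho / r) (phi + eta) * aa eta)%C).
    { rewrite <- zz_S, Hz, aa_polar, polar_mult. f_equal; [field | ring]; lra. }
    apply (f_equal (fun z => z / aa eta)%C) in E. field_simplify in E; assumption. }
  rewrite (ww_S_polar _ _ _ Hprev).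
  replace (r ^ 2 * (rho / r)) with (r * rho) by (field; lra).
  reflexivity.
Qed.

Lemma orbit_moduli_bounds rho :
  0 <= rho <= c / 8 ->
  rho * (c * r + 1) <= c /\ rho * (r + 1) <= c /\ r * (1 + rho) <= 1 /\
  rho * r * (c * r + 1) <= c.
Proof.
  intros Hrho. pose proof inv_2cos_pos. pose proof inv_2cos_le. pose proof cc_bounds.
  assert (c * r <= 9 / 8) by nra.
  assert (K : rho * (c * r + 1) <= c) by nra.
  repeat split; nra.
Qed.

Lemma orbit_triangles n rho th :
  zz eta (S n) = polar rho th -> 0 < rho <= c / 8 ->
  (0 < th <= eta ->
   in_triangle (zz eta (S (S n))) 0 (zz eta 0) 1 /\
   in_triangle (zz eta (S (S (S n)))) 0 (zz eta 1) (zz eta 0) /\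
   in_triangle (ww eta (S (S n))) 1 (ww eta 0) (aa eta) /\
   in_triangle (ww eta (S (S (S n)))) 1 (ww eta 1) (ww eta 0)) /\
  (eta < th <= 2 * eta ->
   in_triangle (zz eta (S (S n))) 0 1 (zz eta (S n)) /\
   in_triangle (zz eta (S (S (S n)))) 0 (zz eta 0) 1 /\
   in_triangle (ww eta (S (S n))) 1 (aa eta) (ww eta (S n)) /\
   in_triangle (ww eta (S (S (S n)))) 1 (ww eta 0) (aa eta)).
Proof.
  intros Hz Hrho. pose proof inv_2cos_pos. pose proof inv_2cos_le. pose proof cc_bounds.
  pose proof PI_RGT_0. pose proof (orbit_moduli_bounds rho ltac:(lra)).
  pose proof (zz_S_polar _ _ _ Hz) as Hz2.
  rewrite (zz_S_polar _ _ _ Hz2), (ww_S_polar _ _ _ Hz), (ww_S_polar _ _ _ Hz2),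
    (zz_S_polar _ _ _ zz_0), (ww_S_polar _ _ _ zz_0), (ww_polar _ _ _ Hz),
    Hz, Hz2, zz_0, ww_0, aa_one_minus.
  (* the monomials by which the bounds of [orbit_moduli_bounds] get scaled *)
  assert (0 < r * r) by nra. assert (0 < c * r) by nra.
  assert (0 < c * r * r * r) by nra. assert (0 < c * r * r * r * r * r) by nra.
  assert (0 < r * r * rho) by nra.
  split; intros Hth; repeat split.
  all: try apply in_triangle_one_minus; rewrite ?(RtoC_polar 1); apply in_triangle_0_polar_small.
  all: nra.
Qed.

End Polar_form.

Theorem lemma6p5 (k : nat) (eta : R) :
  (4 <= k)%nat ->
  eta_k (S k) <= eta < PI / INR k ->
  ((exists th, is_arg (zz eta (2 * k - 1)) th /\ 0 < th <= eta) ->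
     in_triangle (zz eta (2 * k)) (RtoC 0) (zz eta 0) (RtoC 1) /\
     in_triangle (zz eta (2 * k + 1)) (RtoC 0) (zz eta 1) (zz eta 0) /\
     in_triangle (ww eta (2 * k)) (RtoC 1) (ww eta 0) (aa eta) /\
     in_triangle (ww eta (2 * k + 1)) (RtoC 1) (ww eta 1) (ww eta 0)) /\
  ((exists th, is_arg (zz eta (2 * k - 1)) th /\ eta < th <= 2 * eta) ->
     in_triangle (zz eta (2 * k)) (RtoC 0) (RtoC 1) (zz eta (2 * k - 1)) /\
     in_triangle (zz eta (2 * k + 1)) (RtoC 0) (zz eta 0) (RtoC 1) /\
     in_triangle (ww eta (2 * k)) (RtoC 1) (aa eta) (ww eta (2 * k - 1)) /\
     in_triangle (ww eta (2 * k + 1)) (RtoC 1) (ww eta 0) (aa eta)).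
Proof.
  intros Hk [_ Heta_lt].
  assert (Heta_le : eta <= PI / 4).
  { pose proof PI_RGT_0. pose proof (le_INR 4 k Hk) as Hk4. simpl in Hk4.
    apply Rlt_le, (Rlt_le_trans _ _ _ Heta_lt).
    apply Rmult_le_compat_l; [lra |]. apply Rinv_le_contravar; lra. }
  assert (Hidx : exists n, (7 <= S n /\ 2 * k - 1 = S n /\ 2 * k = S (S n) /\
                           2 * k + 1 = S (S (S n)))%nat)
    by (exists (2 * k - 2)%nat; lia).
  destruct Hidx as (n & Hn & -> & -> & ->).
  split; intros (th & Harg & Hth); assert (eta_pos : 0 < eta) by lra;
    pose proof (orbit_triangles eta eta_pos Heta_le n _ th (is_arg_polar _ _ Harg)
                  (Cmod_zz_bounds eta eta_pos Heta_le _ Hn));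
    tauto.
Qed.
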